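(* For any valid packing $p$ of a finite multiset of items into a finite sequence of bins, there is a thrifty packing of those items into that sequence that uses a subset of the bins used by $p$.
   Context: Grid Scheduling setting: items have positive integer sizes; bins have positive integer sizes and form a sequence. A partial packing assigns some items to bins such that the total size of the items in each bin is at most the bin's size; a packing assigns every item. A bin is used if it receives at least one item. A (partial) packing is valid if each empty bin is smaller than every unpacked item and smaller than every item packed in a later bin. A bin in a (partial) packing is wasteful if its empty space (size minus total size of its items) is at least as large as the size of some unpacked item or of some item packed in a later bin. A (partial) packing is thrifty if it has no wasteful bin. *)

From mathcomp Require Import all_boot.
Set Implicit Arguments. Unset Strict Implicit. Unset Printing Implicit Defensive.

(* Items: a finite multiset of positive sizes, given as a list [items]
   (item i has size nth 0 items i).  A partial packing assigns each item
   index either [None] (unpacked) or [Some j] (packed in bin j). *)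

Definition assignment (items bins : seq nat) :=
  'I_(size items) -> option 'I_(size bins).

Definition isize (items : seq nat) (i : 'I_(size items)) : nat := nth 0 items i.
Definition bsize (bins : seq nat) (j : 'I_(size bins)) : nat := nth 0 bins j.

Definition load items bins (f : assignment items bins) (j : 'I_(size bins)) : nat :=
  \sum_(i | f i == Some j) isize i.

Definition partial_packing items bins (f : assignment items bins) : Prop :=
  forall j, load f j <= bsize j.

Definition packing items bins (f : assignment items bins) : Prop :=
  partial_packing f /\ forall i, f i != None.

Definition used items bins (f : assignment items bins) (j : 'I_(size bins)) : bool :=
  [exists i, f i == Some j].

Definition unpacked_or_later items bins (f : assignment items bins)
  (j : 'I_(size bins)) (i : 'I_(size items)) : bool :=
  if f i is Some k then j < k else true.

Definition valid items bins (f : assignment items bins) : Prop :=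
  partial_packing f /\
  forall j, ~~ used f j ->
    forall i, unpacked_or_later f j i -> bsize j < isize i.

Definition wasteful items bins (f : assignment items bins) (j : 'I_(size bins)) : Prop :=
  exists i, unpacked_or_later f j i /\ isize i <= bsize j - load f j.

Definition thrifty items bins (f : assignment items bins) : Prop :=
  partial_packing f /\ forall j, ~ wasteful f j.

From mathcomp Require Import all_boot.
From Stdlib Require Import Classical.

Set Implicit Arguments. Unset Strict Implicit. Unset Printing Implicit Defensive.

(* Starting from p, repeatedly take a wasteful bin j and move into it an item i
   that sits in a later bin.  This keeps the packing feasible (i fits in the
   empty space of j) and strictly decreases the sum of the bin indices of the
   items, so the process stops at a thrifty packing.  Items only ever move to
   earlier bins, so if the target bin j were unused by p, item i would be packed
   after j by p as well, and validity of p would give [bsize j < isize i],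
   contradicting that i fits in j: no bin outside those used by p gets used. *)

Section MoveItem.

Variables items bins : seq nat.
Implicit Types q : assignment items bins.

Definition move_item q (i : 'I_(size items)) (j : 'I_(size bins)) :
    assignment items bins :=
  fun x => if x == i then Some j else q x.

Definition bin_index_sum q : nat :=
  \sum_x (if q x is Some k then val k else 0).

Lemma load_move_item_target q i j :
  q i != Some j -> load (move_item q i j) j = isize i + load q j.
Proof.
move=> qij; rewrite /load /move_item (bigD1 i) ?eqxx //=; congr (_ + _).
apply: eq_bigl => x; case: (eqVneq x i) => [->|_]; last by rewrite andbT.
by rewrite andbF; apply/esym/negbTE.
Qed.

Lemma load_move_item_other q i j j' :
  j' != j -> load (move_item q i j) j' <= load q j'.
Proof.
move=> j'j; rewrite /load !(big_mkcond (fun x => _ == _)) /=.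
apply: leq_sum => x _; rewrite /move_item; case: (eqVneq x i) => // _.
by case: eqP => // -[E]; rewrite E eqxx in j'j.
Qed.

Lemma partial_packing_move_item q i j :
  partial_packing q -> q i != Some j -> isize i <= bsize j - load q j ->
  partial_packing (move_item q i j).
Proof.
move=> pq qij fits j'; case: (eqVneq j' j) => [->|j'j].
  by rewrite load_move_item_target // addnC -leq_subRL.
exact: leq_trans (load_move_item_other q i j'j) (pq j').
Qed.

Lemma bin_index_sum_move_item q i (j k : 'I_(size bins)) :
  q i = Some k -> j < k -> bin_index_sum (move_item q i j) < bin_index_sum q.
Proof.
move=> qi jk; rewrite /bin_index_sum (bigD1 i) //= [X in _ < X](bigD1 i) //=.
rewrite /move_item eqxx qi.
rewrite (eq_bigr (fun x => if q x is Some k then val k else 0)) ?ltn_add2r //.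
by move=> x /negbTE ->.
Qed.

Lemma used_move_item q i j j' :
  used (move_item q i j) j' -> j' = j \/ used q j'.
Proof.
case/existsP=> x; rewrite /move_item; case: (x == i) => [/eqP[]|qx]; first by left.
by right; apply/existsP; exists x.
Qed.

Lemma valid_used_of_fits (p : assignment items bins) j i :
  valid p -> unpacked_or_later p j i -> isize i <= bsize j -> used p j.
Proof.
move=> [_ valid_p] later_i fits; apply: contraT => unused_j.
by rewrite leqNgt (valid_p j unused_j i later_i) in fits.
Qed.

End MoveItem.

Section Descent.

Variables items bins : seq nat.
Variable p : assignment items bins.
Hypothesis valid_p : valid p.
Implicit Types q : assignment items bins.

Definition packs_no_later q :=
  forall j x, unpacked_or_later q j x -> unpacked_or_later p j x.

Definition descendant q :=
  [/\ packing q, packs_no_later q & forall j, used q j -> used p j].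

Lemma descendant_move_wasteful q :
  descendant q -> ~ thrifty q ->
  exists2 q', descendant q' & bin_index_sum q' < bin_index_sum q.
Proof.
case=> -[pq packed_q] no_later usedqp not_thrifty.
have [j [i [later_i fits]]] : exists j, wasteful q j.
  by apply: NNPP => no_waste; apply: not_thrifty; split=> // j wj; apply: no_waste; exists j.
move: later_i; rewrite /unpacked_or_later.
case qi: (q i) (packed_q i) => [k|] // _ jk.
have qij : q i != Some j by rewrite qi; apply/eqP => -[E]; rewrite E ltnn in jk.
exists (move_item q i j); last exact: bin_index_sum_move_item qi jk.
split.
- split; first exact: partial_packing_move_item.
  by move=> x; rewrite /move_item; case: (x == i).
- move=> j' x; rewrite /unpacked_or_later /move_item.
  case: (eqVneq x i) => [->|_]; last exact: no_later.
  move=> j'j; apply: no_later; rewrite /unpacked_or_later qi.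
  exact: ltn_trans j'j jk.
- move=> j' /used_move_item [->|]; last exact: usedqp.
  apply: (valid_used_of_fits valid_p (i := i)).
    by apply: no_later; rewrite /unpacked_or_later qi.
  exact: leq_trans fits (leq_subr _ _).
Qed.

Lemma thrifty_descendant q :
  descendant q -> exists2 q', descendant q' & thrifty q'.
Proof.
elim: {q}(bin_index_sum q) {-2}q (leqnn (bin_index_sum q)) => [|n IH] q le_qn dq.
all: case: (classic (thrifty q)) => [|not_thrifty]; first by exists q.
all: have [q' dq' lt_q'q] := descendant_move_wasteful dq not_thrifty.
  by move: le_qn; rewrite leqn0 => /eqP E; rewrite E in lt_q'q.
exact: IH q' (leq_trans lt_q'q le_qn) dq'.
Qed.

End Descent.

Theorem lemma2 (items bins : seq nat)
  (items_pos : all (fun s => 0 < s) items) (bins_pos : all (fun s => 0 < s) bins)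
  (p : assignment items bins) :
  packing p -> valid p ->
  exists q : assignment items bins,
    packing q /\ thrifty q /\ (forall j, used q j -> used p j).
Proof.
move=> pp vp.
have dp : descendant p p by split.
have [q [pq _ usedqp] tq] := thrifty_descendant vp dp.
by exists q.
Qed.
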